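(* Let $G$ be a cubic graph. Suppose that for every vertex $x$ of $G$ there is a subgraph $H$ of $G$, all of whose vertices are far from $x$, with the following properties: (1) $H$ consists of two vertices $v,w$ together with three internally vertex-disjoint paths from $v$ to $w$; (2) each of these three paths has an even number of edges; (3) no two vertices of $H$ are joined by a short path in $G$ that uses no edge of $H$ (in particular $H$ is an induced subgraph); (4) each of the three paths is long. Then in the coloring game on $G$ with $3$ colors (A moving first), B has a winning strategy; consequently $\chi_g(G)=4$.
   Context: Coloring game: two players A and B alternately (A moves first) choose an uncolored vertex and assign it a color from $\{1,\dots,k\}$ keeping the partial coloring proper; A wins if all vertices get colored, B wins if some uncolored vertex has all $k$ colors among its neighbors; $\chi_g(G)$ is the least $k$ for which A has a winning strategy. Two vertices are close if they are joined by a path of length at most two (equivalently, their distance is at most 2); otherwise they are far apart. A path is short if some vertex on it is close to both of its endpoints; otherwise it is long. *)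

From mathcomp Require Import all_boot.
Set Implicit Arguments. Unset Strict Implicit. Unset Printing Implicit Defensive.

Section Graphs.
Variables (T : finType) (e : rel T).

Definition simple_graph : Prop := symmetric e /\ irreflexive e.

Definition cubic : Prop := forall x : T, #|[set y | e x y]| = 3.

Definition close (x y : T) : bool :=
  [|| x == y, e x y | [exists z, e x z && e z y]].

(* a :: q is a (simple) path in the graph from a to b *)
Definition spath (a b : T) (q : seq T) : bool :=
  [&& path e a q, last a q == b & uniq (a :: q)].

Definition short_path (a : T) (q : seq T) : bool :=
  has (fun z => close z a && close z (last a q)) (a :: q).

Definition pedge (s : seq T) (x y : T) : bool :=
  has (fun pr : T * T => ((pr.1 == x) && (pr.2 == y)) || ((pr.1 == y) && (pr.2 == x)))
      (zip s (behead s)).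

(* internal vertices of the path a :: q (q ends at the other endpoint) *)
Definition interior (q : seq T) : seq T := take (size q).-1 q.

Definition theta_ok (x v w : T) (p1 p2 p3 : seq T) : Prop :=
  let VH := v :: p1 ++ p2 ++ p3 in
  let Hedge := fun y z => [|| pedge (v :: p1) y z, pedge (v :: p2) y z
                            | pedge (v :: p3) y z] in
  [/\
      [/\ v != w, spath v w p1, spath v w p2, spath v w p3 & 
      [/\ all (fun z => z \notin interior p2) (interior p1),
          all (fun z => z \notin interior p3) (interior p1) &
          all (fun z => z \notin interior p3) (interior p2)]],
      [/\ ~~ odd (size p1), ~~ odd (size p2) & ~~ odd (size p3)],
      (forall (a b : T) (q : seq T), a \in VH -> b \in VH -> a != b ->
          spath a b q -> (forall y z, pedge (a :: q) y z -> ~~ Hedge y z) ->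
          ~~ short_path a q),
      [/\ ~~ short_path v p1, ~~ short_path v p2 & ~~ short_path v p3]
    &
      all (fun u => ~~ close x u) VH].

Section Game.
Variable k : nat.

Definition coloring := {ffun T -> option 'I_k}.

Definition empty_coloring : coloring := [ffun => None].

Definition legal (c : coloring) (v : T) (a : 'I_k) : bool :=
  (c v == None) && [forall u, e v u ==> (c u != Some a)].

Definition upd (c : coloring) (v : T) (a : 'I_k) : coloring :=
  [ffun u => if u == v then Some a else c u].

Definition complete (c : coloring) : bool := [forall v, c v != None].

Definition blocked (c : coloring) : bool :=
  [exists v, (c v == None) &&
     [forall a : 'I_k, [exists u, e v u && (c u == Some a)]]].

(* A_wins b c : A has a winning strategy from position c, where b = true
   means A is to move and b = false means B is to move. *)
Inductive A_wins : bool -> coloring -> Prop :=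
| AW_done b c : complete c -> A_wins b c
| AW_Amove c v a : ~~ blocked c -> legal c v a ->
    A_wins false (upd c v a) -> A_wins true c
| AW_Bmove c : ~~ blocked c ->
    (forall v a, legal c v a -> A_wins true (upd c v a)) -> A_wins false c.

Inductive B_wins : bool -> coloring -> Prop :=
| BW_blocked b c : blocked c -> B_wins b c
| BW_Amove c : ~~ complete c ->
    (forall v a, legal c v a -> B_wins false (upd c v a)) -> B_wins true c
| BW_Bmove c v a : legal c v a -> B_wins true (upd c v a) -> B_wins false c.

End Game.

Definition A_wins_game (k : nat) : Prop := @A_wins k true (empty_coloring k).
Definition B_wins_game (k : nat) : Prop := @B_wins k true (empty_coloring k).

Definition game_chromatic_number_is (n : nat) : Prop :=
  A_wins_game n /\ (forall j, j < n -> ~ A_wins_game j).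

End Graphs.

From mathcomp Require Import all_boot zify.
Set Implicit Arguments. Unset Strict Implicit. Unset Printing Implicit Defensive.

(* We prove that B wins the 3-colour game (A first) on a cubic
   graph G containing, far from every vertex x, an even theta H with the
   properties (1)-(4); the value chi_g(G) = 4 then follows, because a
   cubic graph can never be blocked with 4 colours and B trivially wins
   with at most 2 colours.

   After A colours x, B colours the branch vertex v of a
   theta far from x.  Around each vertex a of H consider its zone, the
   ball of radius 2 around a in G minus the edges of H; condition (3)
   makes these zones pairwise disjoint, and every inner vertex of a
   branch has a pendant neighbour y (outside H) whose neighbourhood lies
   in its zone.  A's answer p lies in the zones of at most one branch, so
   two branches (or one, when p = w) stay clean.  Walking along them
   from v, B repeatedly colours every second vertex t so that its
   predecessor u sees two colours: B then threatens to block u through y,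
   forcing A to play inside the zone of u, and B moves on.  The walk ends
   at a coloured vertex (w or v, the branches having even length), where
   B creates two threats at once and wins. *)

Definition col0 : 'I_3 := @Ordinal 3 0 isT.
Definition col1 : 'I_3 := @Ordinal 3 1 isT.
Definition col2 : 'I_3 := @Ordinal 3 2 isT.

Lemma colour3P (x : 'I_3) : [\/ x = col0, x = col1 | x = col2].
Proof.
by case: x => [[|[|[|m]]] lt_m3] //; [constructor 1|constructor 2|constructor 3];
  apply: val_inj.
Qed.

Lemma third_colour (a b : 'I_3) : a != b -> exists c : 'I_3,
  [/\ c != a, c != b & forall x, x != c -> x = a \/ x = b].
Proof.
case: (colour3P a) => ->; case: (colour3P b) => -> // _;
  [exists col2|exists col1|exists col2|exists col0|exists col1|exists col0];
  by split => // x; case: (colour3P x) => ->; auto.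
Qed.

Lemma avoid_two (o1 o2 : option 'I_3) : exists b : 'I_3, Some b != o1 /\ Some b != o2.
Proof.
have avoid1 (a : 'I_3) : exists b : 'I_3, b != a.
  by case: (colour3P a) => ->; [exists col1|exists col0|exists col0].
case: o1 => [a|]; case: o2 => [a'|]; try by exists col0.
- case: (eqVneq a a') => [<-|aa'].
    by have [b ba] := avoid1 a; exists b.
  by have [b [ba ba' _]] := third_colour aa'; exists b.
- by have [b ba] := avoid1 a; exists b.
- by have [b ba] := avoid1 a'; exists b.
Qed.

Section Game.
Variables (T : finType) (e : rel T).
Hypotheses (esym : symmetric e) (eirr : irreflexive e).
Variable k : nat.
Local Notation colouring := (coloring T k).

Lemma updE (c : colouring) v a u : upd c v a u = if u == v then Some a else c u.
Proof. by rewrite /upd ffunE. Qed.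

Lemma upd_coloured (c : colouring) v a u : c u != None -> upd c v a u != None.
Proof. by rewrite updE; case: ifP. Qed.

Lemma legal_uncoloured (c : colouring) v a : legal e c v a -> c v = None.
Proof. by case/andP=> /eqP. Qed.

Lemma edge_neq u y : e u y -> u != y.
Proof. by apply: contraTneq => ->; rewrite eirr. Qed.

Lemma A_B_exclusive b (c : colouring) : A_wins e b c -> B_wins e b c -> False.
Proof.
elim=> {b c} [b c compl|c v a unblocked lg _ IH|c unblocked _ IH] BW.
- elim: BW compl => [b' c' /existsP[u /andP[/eqP cu _]] /forallP/(_ u)|
                     c' ncompl _ _ compl|c' u a _ _ IH compl].
  + by rewrite cu.
  + by rewrite compl in ncompl.
  + by apply: IH; apply/forallP=> y; apply: upd_coloured; move/forallP: compl.
- by inversion BW as [? ? bl|? _ wins|]; [rewrite bl in unblocked|exact: IH (wins v a lg)].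
- by inversion BW as [? ? bl| |? ? ? lg wins]; [rewrite bl in unblocked|exact: IH _ _ lg wins].
Qed.

Definition nbhd (y p : T) : bool := (p == y) || e y p.

(* B threatens to block the uncoloured vertex u by colouring its
   uncoloured neighbour y with colour kk: u already sees every other
   colour, and kk is legal at y. *)
Definition threat (c : colouring) (u y : T) (kk : 'I_k) : Prop :=
  [/\ c u = None, c y = None, e u y,
      (forall a, a != kk -> exists z, e u z /\ c z = Some a) &
      (forall z, e y z -> c z != Some kk)].

Lemma threat_win c u y kk : threat c u y kk -> B_wins e false c.
Proof.
case=> cu cy euy seen freey.
apply: (@BW_Bmove _ _ _ c y kk).
  by rewrite /legal cy eqxx /=; apply/forallP=> z; apply/implyP; apply: freey.
apply: BW_blocked; apply/existsP; exists u.
rewrite updE (negbTE (edge_neq euy)) cu eqxx /=; apply/forallP=> a.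
case: (eqVneq a kk) => [->|akk].
  by apply/existsP; exists y; rewrite euy updE !eqxx.
have [z [euz cz]] := seen a akk; apply/existsP; exists z; rewrite euz updE.
by case: (z =P y) => [zy|_]; [move: cz; rewrite zy cy|rewrite cz eqxx].
Qed.

Lemma threat_upd c u y kk p a : threat c u y kk -> c p = None -> ~~ nbhd y p ->
  threat (upd c p a) u y kk.
Proof.
case=> cu cy euy seen freey cp; rewrite /nbhd negb_or => /andP[py eyp].
have up : u != p by apply: contraNneq eyp => <-; rewrite esym.
split=> //.
- by rewrite updE (negbTE up).
- by rewrite updE eq_sym (negbTE py).
- move=> b /seen [z [euz cz]]; exists z; rewrite updE.
  by case: (z =P p) => [zp|_]; [move: cz; rewrite zp cp|].
- move=> z eyz; rewrite updE; case: (z =P p) => [zp|_]; last exact: freey.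
  by move: eyp; rewrite -zp eyz.
Qed.

Lemma answer_threat c u y kk p a : threat c u y kk -> legal e c p a -> ~~ nbhd y p ->
  B_wins e false (upd c p a).
Proof. by move=> th /legal_uncoloured cp np; apply: threat_win (threat_upd a th cp np). Qed.

Lemma double_threat c u1 y1 k1 u2 y2 k2 :
  threat c u1 y1 k1 -> threat c u2 y2 k2 -> (forall p, ~~ (nbhd y1 p && nbhd y2 p)) ->
  B_wins e true c.
Proof.
move=> th1 th2 disj; apply: BW_Amove.
  by apply/negP=> /forallP/(_ u1); case: th1 => ->.
move=> p a lg; case n1: (nbhd y1 p).
  by apply: answer_threat th2 lg _; have := disj p; rewrite n1.
by apply: answer_threat th1 lg _; rewrite n1.
Qed.

End Game.

Section CubicBounds.
Variables (T : finType) (e : rel T).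
Hypotheses (esym : symmetric e) (eirr : irreflexive e) (ecub : cubic e).

Lemma seen_colours_le3 k (c : coloring T k) v :
  (forall a : 'I_k, exists u, e v u && (c u == Some a)) -> k <= 3.
Proof.
move=> seen; pose f a := odflt v [pick u | e v u && (c u == Some a)].
have fP a : e v (f a) && (c (f a) == Some a).
  by rewrite /f; case: pickP => [u //|/= none]; have [u] := seen a; rewrite none.
have f_inj : injective f.
  by move=> a b fab; have /andP[_ /eqP] := fP a; rewrite fab; case/andP: (fP b) => _ /eqP-> [].
rewrite -(ecub v) -{1}(card_ord k) -(card_imset _ f_inj); apply: subset_leq_card.
by apply/subsetP=> u /imsetP[a _ ->]; rewrite inE; case/andP: (fP a).
Qed.

Lemma never_blocked4 (c : coloring T 4) : ~~ blocked e c.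
Proof.
apply/negP=> /existsP[v /andP[_ /forallP seen]].
suff : 4 <= 3 by []; apply: (seen_colours_le3 (c := c) (v := v)) => a; exact/existsP.
Qed.

Lemma legal_colour4 (c : coloring T 4) v : c v = None -> exists a, legal e c v a.
Proof.
move=> cv; case: (boolP [exists a, legal e c v a]) => [/existsP //|/existsPn none].
suff : 4 <= 3 by []; apply: (seen_colours_le3 (c := c) (v := v)) => a.
by have := none a; rewrite /legal cv eqxx negb_forall => /existsP[u]; rewrite negb_imply negbK; exists u.
Qed.

Definition uncoloured k (c : coloring T k) : {set T} := [set v | c v == None].

Lemma uncoloured_upd k (c : coloring T k) v a : c v = None ->
  #|uncoloured (upd c v a)| < #|uncoloured c|.
Proof.
move=> cv; apply: proper_card; apply/properP; split.
  by apply/subsetP=> u; rewrite !inE updE; case: ifP.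
by exists v; rewrite !inE ?updE ?eqxx ?cv.
Qed.

(* With 4 colours every position is won by A, whoever is to move: a legal
   move always exists and no vertex is ever blocked. *)
Lemma A_wins4_from b (c : coloring T 4) : A_wins e b c.
Proof.
move: {2}#|_| (leqnn #|uncoloured c|) => n; elim: n b c => [|n IH] b c size_c.
  apply: AW_done; apply/forallP=> v; apply/negP=> /eqP cv.
  by move: size_c; rewrite leqn0 => /eqP/cards0_eq/setP/(_ v); rewrite !inE cv.
have smaller v a : legal e c v a -> #|uncoloured (upd c v a)| <= n.
  by move=> /legal_uncoloured cv; rewrite -ltnS; apply: leq_trans (uncoloured_upd a cv) size_c.
case: (boolP (complete c)) => [compl|/forallPn[v /negPn/eqP cv]]; first exact: AW_done.
case: b; last by apply: AW_Bmove (never_blocked4 c) _ => u a lg; exact: IH (smaller _ _ lg).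
by have [a lg] := legal_colour4 cv; exact: AW_Amove (never_blocked4 c) lg (IH _ _ (smaller _ _ lg)).
Qed.

Lemma some_neighbour v : exists u, e v u.
Proof.
have /card_gt0P[u] : 0 < #|[set u | e v u]| by rewrite ecub.
by rewrite inE; exists u.
Qed.

Lemma neighbour_except v a b : exists y, [&& e v y, y != a & y != b].
Proof.
have : 0 < #|[set y | e v y] :\ a :\ b|.
  have := cardsD1 a [set y | e v y]; have := cardsD1 b ([set y | e v y] :\ a).
  by rewrite ecub; do 2 case: (_ \in _); move=> /= h1 h2; lia.
by case/card_gt0P=> y; rewrite !inE => /and3P[yb ya evy]; exists y; rewrite evy ya yb.
Qed.

Hypothesis T_nonempty : 0 < #|T|.

Lemma empty_not_complete k : ~~ complete (empty_coloring T k).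
Proof.
by case/card_gt0P: T_nonempty => v _; apply/forallPn; exists v; rewrite ffunE.
Qed.

(* With no colour at all, every vertex is blocked at once. *)
Lemma B_wins0 : B_wins_game e 0.
Proof.
case/card_gt0P: T_nonempty => v _; apply/BW_blocked/existsP; exists v.
by rewrite ffunE eqxx; apply/forallP; case.
Qed.

(* With one colour, any neighbour of A's first vertex is blocked. *)
Lemma B_wins1 : B_wins_game e 1.
Proof.
apply: BW_Amove (empty_not_complete 1) _ => x a _.
have [y exy] := some_neighbour x; apply/BW_blocked/existsP; exists y.
have yx : (y == x) = false by apply/negbTE; rewrite eq_sym (edge_neq eirr exy).
rewrite updE yx ffunE eqxx.
apply/forallP=> b; apply/existsP; exists x; rewrite esym exy updE eqxx /=.
by apply/eqP; congr Some; apply/val_inj; case: a b => [[]] // ? [[]].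
Qed.

Lemma two_colours (a a' : 'I_2) : a != a' -> forall b, b = a \/ b = a'.
Proof.
by case: a a' => [[|[|?]] ?] // [[|[|?]] ?] // _ [[|[|?]] ?] //;
  [left|right|right|left]; apply: val_inj.
Qed.

(* With two colours, B answers A's vertex x with the other colour at a
   vertex y two steps away; their common neighbour is blocked. *)
Lemma B_wins2 : B_wins_game e 2.
Proof.
apply: BW_Amove (empty_not_complete 2) _ => x a _.
have [z exz] := some_neighbour x; have [y /and3P[ezy yx _]] := neighbour_except z x x.
have [a' aa'] : exists a' : 'I_2, a != a'.
  by case: a => [[|[|?]] ?] //; [exists (@Ordinal 2 1 isT)|exists (@Ordinal 2 0 isT)].
have c1E u : upd (empty_coloring T 2) x a u = if u == x then Some a else None.
  by rewrite updE ffunE.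
apply: (@BW_Bmove _ _ _ _ y a').
  rewrite /legal c1E (negbTE yx) eqxx; apply/forallP=> u; apply/implyP=> _.
  by rewrite c1E; case: ifP.
apply/BW_blocked/existsP; exists z.
have zy : (z == y) = false by apply/negbTE; rewrite (edge_neq eirr ezy).
have zx : (z == x) = false by apply/negbTE; rewrite eq_sym (edge_neq eirr exz).
rewrite updE zy c1E zx eqxx.
apply/forallP=> b; apply/existsP.
have [->|->] := two_colours aa' b.
- have xy : (x == y) = false by rewrite eq_sym (negbTE yx).
  by exists x; rewrite esym exz updE xy c1E !eqxx.
- by exists y; rewrite ezy updE !eqxx.
Qed.

End CubicBounds.

Fixpoint evens (T : Type) (s : seq T) : seq T :=
  if s is u :: s' then u :: (if s' is _ :: s'' then evens s'' else [::]) else [::].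

Lemma interior_cons2 (T : finType) (u t : T) s : s != [::] ->
  interior [:: u, t & s] = [:: u, t & interior s].
Proof. by case: s. Qed.

Lemma interior_rcons (T : finType) (q : seq T) (y : T) : interior (rcons q y) = q.
Proof. by rewrite /interior size_rcons -cats1 take_size_cat. Qed.

Lemma evens_cat (T : Type) (s1 s2 : seq T) : ~~ odd (size s1) ->
  evens (s1 ++ s2) = evens s1 ++ evens s2.
Proof.
have [n] := ubnP (size s1); elim: n s1 => // n IH [|u [|t s1]] //= lt_s1n ev.
by rewrite IH //; [apply: ltnW | rewrite negbK in ev].
Qed.

Lemma evens_interior (T : finType) (s : seq T) : ~~ odd (size s) ->
  {subset evens s <= interior s}.
Proof.
have [n] := ubnP (size s); elim: n s => // n IH [|u [|t s]] //= lt_sn ev a.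
rewrite inE => /orP[/eqP ->|ain]; first by rewrite /interior /= inE eqxx.
have s0 : s != [::] by case: s ain {IH lt_sn ev}.
rewrite interior_cons2 // !inE IH ?orbT //; [exact: ltnW|by rewrite negbK in ev].
Qed.

Lemma cat_prefix3 (T : Type) (q r s : seq T) (a b c : T) : 3 <= size q ->
  q ++ r = [:: a, b, c & s] -> exists r', q = [:: a, b, c & r'].
Proof. by case: q => [|x [|y [|z q]]] //= _ [-> -> ->]; exists q. Qed.

Lemma mem_rcons_inner (T : eqType) (q s r : seq T) (w t y : T) :
  rcons q w = s ++ [:: t, y & r] -> t \in q.
Proof.
rewrite (lastI y r) -rcons_cons -rcons_cat => /rcons_inj [-> _].
by rewrite mem_cat mem_head orbT.
Qed.

(* A walk from a coloured vertex t0 is a path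
   t0, u1, t1, u2, t2, ..., um, tm of even length ending at a coloured
   vertex tm; its owners (all vertices but tm) own pairwise disjoint
   zones, and each ui has a pendant neighbour whose neighbourhood stays
   in the zone of ui.  If all these zones are uncoloured, B (to move)
   wins: B colours t1 so that u1 sees two colours and threatens u1, A
   has to answer inside the zone of u1, and B continues from t1; on the
   last segment B threatens u(m-1) and um at once. *)

Section Walk.
Variables (T : finType) (e : rel T).
Hypotheses (esym : symmetric e) (eirr : irreflexive e) (ecub : cubic e).
Variable zone : T -> {set T}.

Definition pendant (u : T) : Prop :=
  exists y, [/\ e u y, y \in zone u & forall z, e y z -> z \in zone u].

(* A walk from t0 with the properties listed above; the owners of the
   zones are the vertices of interior s, the ui are evens s. *)
Record walk (t0 : T) (s : seq T) : Prop := Walk {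
  walk_path : path e t0 s;
  walk_even : ~~ odd (size s);
  walk_long : 4 <= size s;
  walk_uniq : uniq (interior s);
  walk_disjoint : {in interior s &, forall a b, a != b -> [disjoint zone a & zone b]};
  walk_own : {in interior s, forall a, a \in zone a};
  walk_pendant : {in evens s, forall u, pendant u};
  walk_end : forall s1 u t u' t', s = s1 ++ [:: u; t; u'; t'] ->
    forall b, e t b -> [\/ b = u, b = u' | b \in zone t] }.

Definition zones_clean (c : coloring T 3) (owners : seq T) : Prop :=
  forall a z, a \in owners -> z \in zone a -> c z = None.

Lemma zones_clean_upd c owners p a : zones_clean c owners ->
  {in owners, forall b, p \notin zone b} -> zones_clean (upd c p a) owners.
Proof.
move=> clean out b z bI zb; rewrite updE; case: (z =P p) => [zp|_]; last exact: clean zb.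
by move: (out _ bI); rewrite -zp zb.
Qed.

Lemma walk_behead t0 u t s : walk t0 [:: u, t & s] -> 4 <= size s -> walk t s.
Proof.
case=> + ev _ un disj own pend fin long => /= /and3P[_ _ pth].
have s0 : s != [::] by case: (s) long.
rewrite interior_cons2 // in un disj own.
have sub : {subset interior s <= [:: u, t & interior s]}.
  by move=> a ain; rewrite !inE ain !orbT.
split=> //; first by rewrite /= negbK in ev.
- by move: un => /= /and3P[_ _].
- by move=> a b ain bin; apply: disj; apply: sub.
- by move=> a ain; apply: own; apply: sub.
- by move=> a ain; apply: pend; rewrite /= inE ain orbT.
- by move=> s1 u1 t1 u1' t1' E; apply: (fin [:: u, t & s1]); rewrite E.
Qed.

Lemma pendant_threat (c : coloring T 3) t0 u t a0 b :
  c t0 = Some a0 -> a0 != b -> e u t0 -> e u t -> pendant u -> u \in zone u ->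
  c t = None -> t \notin zone u -> (forall z, z \in zone u -> c z = None) ->
  exists y kk, threat e (upd c t b) u y kk /\ {subset nbhd e y <= zone u}.
Proof.
move=> ct0 a0b eut0 eut [y [euy yz ny]] uz ct tz clean.
have [kk [ka kb other]] := third_colour a0b.
have zt z : z \in zone u -> (z == t) = false.
  by move=> zz; apply: contraNF tz => /eqP <-.
exists y, kk; split; last by move=> p; rewrite /nbhd => /orP[/eqP ->|/ny].
split.
- by rewrite updE zt ?clean.
- by rewrite updE zt ?clean.
- done.
- move=> a /other [->|->]; last by exists t; rewrite updE eqxx.
  exists t0; split => //; rewrite updE.
  by case: (t0 =P t) => [E|_ //]; move: ct0; rewrite E ct.
- move=> z eyz; rewrite updE zt ?clean ?ny //.
Qed.

Lemma third_neighbour t a b : a != b -> e t a -> e t b ->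
  exists o, forall z, e t z -> [\/ z = a, z = b | z = o].
Proof.
move=> ab eta etb.
have : #|[set z | e t z] :\ b :\ a| == 1.
  have := cardsD1 b [set z | e t z]; have := cardsD1 a ([set z | e t z] :\ b).
  by rewrite ecub !inE ab eta etb /= => -> [->].
case/cards1P=> o Ho; exists o => z etz.
case: (eqVneq z a) => [->|za]; first by constructor 1.
case: (eqVneq z b) => [->|zb]; first by constructor 2.
have : z \in [set z | e t z] :\ b :\ a by rewrite !inE za zb etz.
by rewrite Ho inE => /eqP ->; constructor 3.
Qed.

(* The last segment: B colours t with a colour avoiding both coloured
   ends t0 and t2 and threatens u and u2 at once. *)
Lemma walk_last_segment t0 u t u2 t2 (c : coloring T 3) : walk t0 [:: u; t; u2; t2] ->
  zones_clean c [:: u; t; u2] -> c t0 != None -> c t2 != None -> B_wins e false c.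
Proof.
case=> + _ _ un disj own pend fin clean => /= /and5P[et0u eut etu2 eu2t2 _].
case Ht0: (c t0) => [a0|] // _; case Ht2: (c t2) => [a2|] // _.
have inI : [/\ u \in [:: u; t; u2], t \in [:: u; t; u2] & u2 \in [:: u; t; u2]].
  by rewrite !inE !eqxx !orbT.
case: inI => uI tI u2I.
have [ut uu2 tu2] : [/\ u != t, u != u2 & t != u2].
  by move: un; rewrite /= !inE !negb_or => /and3P[/andP[? ?] ? _].
have zoneF a b z : a \in [:: u; t; u2] -> b \in [:: u; t; u2] -> a != b ->
    z \in zone a -> z \in zone b = false.
  by move=> aI bI ab; apply: disjointFr; apply: disj.
have [b [b0 b2]] := avoid_two (c t0) (c t2).
have a0b : a0 != b by apply: contra_neq b0 => <-; rewrite Ht0.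
have a2b : a2 != b by apply: contra_neq b2 => <-; rewrite Ht2.
have lg : legal e c t b.
  rewrite /legal (clean _ _ tI (own _ tI)) eqxx /=; apply/forallP=> z; apply/implyP=> etz.
  have [->|->|zt] := fin [::] u t u2 t2 erefl z etz.
  - by rewrite (clean _ _ uI (own _ uI)).
  - by rewrite (clean _ _ u2I (own _ u2I)).
  - by rewrite (clean _ _ tI zt).
apply: BW_Bmove lg _.
have ct := clean _ _ tI (own _ tI).
have [y1 [k1 [th1 sub1]]] : exists y kk, threat e (upd c t b) u y kk /\ {subset nbhd e y <= zone u}.
  apply: (pendant_threat Ht0 a0b _ eut _ (own _ uI) ct); first by rewrite esym.
  - by apply: pend; rewrite !inE eqxx.
  - by rewrite (zoneF t) ?(own _ tI) // eq_sym.
  - by move=> z; apply: clean.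
have [y2 [k2 [th2 sub2]]] : exists y kk, threat e (upd c t b) u2 y kk /\ {subset nbhd e y <= zone u2}.
  apply: (pendant_threat Ht2 a2b eu2t2 _ _ (own _ u2I) ct); first by rewrite esym.
  - by apply: pend; rewrite !inE eqxx orbT.
  - by rewrite (zoneF t) ?(own _ tI).
  - by move=> z; apply: clean.
apply: (double_threat esym eirr th1 th2) => p; apply/negP=> /andP[/sub1 pu /sub2].
by rewrite (zoneF u) // (negbTE uu2).
Qed.

Lemma walk_rest_clean t0 u t s (c : coloring T 3) p a b :
  walk t0 [:: u, t & s] -> s != [::] -> zones_clean c (interior [:: u, t & s]) ->
  p \in zone u -> zones_clean (upd (upd c t b) p a) (interior s).
Proof.
case=> _ _ _ un disj own _ _ s0 clean pu; rewrite interior_cons2 // in un disj own clean.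
move: un => /= /andP[uI' /andP[tI' _]].
have sub : {subset interior s <= [:: u, t & interior s]} by move=> d dJ; rewrite !inE dJ !orbT.
have away r d : d \in [:: u, t & interior s] -> d \notin interior s -> r \in zone d ->
    {in interior s, forall a', r \notin zone a'}.
  move=> dI dJ rd a' a'J; rewrite (disjointFr (disj _ _ dI (sub _ a'J) _) rd) //.
  by apply: contraNneq dJ => ->.
have uI : u \in [:: u, t & interior s] by rewrite inE eqxx.
have tI : t \in [:: u, t & interior s] by rewrite !inE eqxx orbT.
have uJ : u \notin interior s by apply: contra _ uI' => uJ; rewrite inE uJ orbT.
apply: zones_clean_upd (away _ _ uI uJ pu).
apply: zones_clean_upd (away _ _ tI tI' (own _ tI)) => a' z a'J.
exact: clean (sub _ a'J).
Qed.

(* B wins along any walk whose zones are clean, by induction on its length: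
   B colours t1 against both t0 and the third neighbour of t1, A must
   answer the threat at u1 inside the zone of u1, and the rest of the walk
   from t1 is a walk whose zones are still clean. *)
Lemma walk_wins n t0 s (c : coloring T 3) : size s <= n -> walk t0 s ->
  zones_clean c (interior s) -> c t0 != None -> c (last t0 s) != None -> B_wins e false c.
Proof.
elim: n t0 s c => [|n IH] t0 [|u [|t [|u2 [|t2 s]]]] c //= size_s W;
  try by case: W => _ _.
case: s IH size_s W => [|u3 s] IH size_s W; first exact: walk_last_segment W.
move=> clean ct0 clast.
have W' : walk t [:: u2, t2, u3 & s].
  apply: walk_behead (W) _; case: (W) => _; by case: s {IH size_s clean clast W}.
case: (W) => + _ _ un disj own pend _ => /= /and3P[et0u eut /andP[etu2 _]].
rewrite !interior_cons2 // in un disj own clean.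
set I := [:: u, t, u2, t2 & _] in un disj own clean.
have [uI tI u2I] : [/\ u \in I, t \in I & u2 \in I] by rewrite !inE !eqxx !orbT.
move: un => /= /andP[uI' _].
have ut : u != t by apply: contraNneq uI' => ->; rewrite inE eqxx.
have uu2 : u != u2 by apply: contraNneq uI' => ->; rewrite !inE eqxx orbT.
have zoneF a b z : a \in I -> b \in I -> a != b -> z \in zone a -> z \in zone b = false.
  by move=> aI bI ab; apply: disjointFr; apply: disj.
have uncol a : a \in I -> c a = None by move=> aI; apply: clean aI (own _ aI).
case Ht0: (c t0) ct0 => [a0|] // _.
have etu : e t u by rewrite esym.
have [o nbr_t] := third_neighbour uu2 etu etu2.
have [b [b0 bo]] := avoid_two (c t0) (c o).
have a0b : a0 != b by apply: contra_neq b0 => <-; rewrite Ht0.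
have lg : legal e c t b.
  rewrite /legal uncol // eqxx /=; apply/forallP=> z; apply/implyP=> /nbr_t[->|->|->].
  - by rewrite uncol.
  - by rewrite uncol.
  - by rewrite eq_sym.
apply: BW_Bmove lg _.
have [y [kk [th sub]]] : exists y kk, threat e (upd c t b) u y kk /\ {subset nbhd e y <= zone u}.
  apply: (pendant_threat Ht0 a0b _ eut _ (own _ uI) (uncol _ tI)); first by rewrite esym.
  - by apply: pend; rewrite inE eqxx.
  - by rewrite (zoneF t) ?(own _ tI) // eq_sym.
  - by move=> z; apply: clean.
apply: BW_Amove => [|p a lgp]; first by apply/forallPn; exists u; case: th => ->.
case: (boolP (nbhd e y p)) => [/sub pu|np]; last exact: answer_threat th lgp np.
apply: (IH t _ _ _ W'); first by move: size_s; rewrite ltnS => /ltnW.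
- exact: walk_rest_clean W isT clean pu.
- by rewrite upd_coloured // updE eqxx.
- by rewrite !upd_coloured.
Qed.

End Walk.

Section Paths.
Variables (T : finType) (e : rel T).
Hypothesis esym : symmetric e.

Lemma pedge_cons2 (x y : T) s a b : pedge [:: x, y & s] a b =
  [|| (x == a) && (y == b), (x == b) && (y == a) | pedge (y :: s) a b].
Proof. by rewrite /pedge /= orbA. Qed.

Lemma pedgeC (s : seq T) a b : pedge s a b = pedge s b a.
Proof. by apply: eq_has => -[? ?] /=; rewrite orbC. Qed.

Lemma pedge_mem (s : seq T) a b : pedge s a b -> a \in s.
Proof.
elim: s => [|x [|y s] IH] //; rewrite pedge_cons2 => /or3P[/andP[/eqP-> _]|/andP[_ /eqP->]|/IH].
- exact: mem_head.
- by rewrite !inE eqxx orbT.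
- exact: (@mem_behead _ (x :: y :: s)).
Qed.

Lemma pedge_path (r : rel T) a s y z : path r a s -> pedge (a :: s) y z -> r y z || r z y.
Proof.
elim: s a => [|b s IH] a //= /andP[rab pth]; rewrite pedge_cons2.
by case/or3P=> [/andP[/eqP<- /eqP<-]|/andP[/eqP<- /eqP<-]|/IH->//]; rewrite rab ?orbT.
Qed.

Lemma pedge_triple s1 (u t u' : T) s2 b : uniq (s1 ++ [:: u, t, u' & s2]) ->
  pedge (s1 ++ [:: u, t, u' & s2]) t b -> b = u \/ b = u'.
Proof.
elim: s1 => [|x s1 IH] /=.
  case/and3P; rewrite !inE !negb_or => /and3P[ut _ _] /andP[tu' ts2] _.
  rewrite !pedge_cons2 (negbTE ut) (eq_sym u' t) (negbTE tu') eqxx !andbF !andbT /=.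
  case/or3P=> [/eqP<-|/eqP<-|/pedge_mem]; [by left|by right|by rewrite inE (negbTE tu') (negbTE ts2)].
move=> /andP[xr ur]; have tr : t \in behead (s1 ++ [:: u, t, u' & s2]).
  by case: s1 {IH xr ur} => [|? ?]; rewrite /= ?mem_cat !inE eqxx ?orbT.
case: (s1 ++ _) IH xr ur tr => // y r IH xr ur tr.
rewrite pedge_cons2 (eq_sym x t); have -> : (t == x) = false.
  by apply: contraNF xr => /eqP <-; rewrite inE tr orbT.
have -> : (y == t) = false by move: ur => /andP[yr _]; apply: contraNF yr => /eqP ->.
by rewrite andbF /=; apply: IH.
Qed.

Lemma close_refl a : close e a a. Proof. by rewrite /close eqxx. Qed.

Lemma close_edge a b : e a b -> close e a b.
Proof. by rewrite /close => ->; rewrite orbT. Qed.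

Lemma close_two a m b : e a m -> e m b -> close e a b.
Proof. by move=> eam emb; rewrite /close; apply/or3P; constructor 3; apply/existsP; exists m; rewrite eam. Qed.

Lemma short_small a q : path e a q -> 0 < size q <= 4 -> short_path e a q.
Proof.
rewrite /short_path; case: q => [|x1 [|x2 [|x3 [|x4 [|x5 q]]]]] // pth _.
- by apply/hasP; exists a; rewrite ?mem_head ?close_refl ?close_edge //; case/andP: pth.
- apply/hasP; exists x1; first by rewrite !inE eqxx orbT.
  by move: pth => /= /and3P[e1 e2 _]; rewrite !close_edge // esym.
- apply/hasP; exists x1; first by rewrite !inE eqxx orbT.
  by move: pth => /= /and4P[e1 e2 e3 _]; rewrite close_edge ?(close_two e2 e3) // esym.
- apply/hasP; exists x2; first by rewrite !inE eqxx !orbT.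
  by move: pth => /= /and5P[e1 e2 e3 e4 _]; rewrite (close_two e3 e4) (@close_two _ x1) // esym.
Qed.

End Paths.
Section ThetaGeometry.
Variables (T : finType) (e : rel T).
Hypotheses (esym : symmetric e) (eirr : irreflexive e) (ecub : cubic e).
Variables (x v w : T) (q1 q2 q3 : seq T).
Hypothesis theta : theta_ok e x v w (rcons q1 w) (rcons q2 w) (rcons q3 w).

Definition branches : seq (seq T) := [:: q1; q2; q3].
Definition Hvertex : seq T := v :: rcons q1 w ++ rcons q2 w ++ rcons q3 w.
Definition Hedge (y z : T) : bool :=
  [|| pedge (v :: rcons q1 w) y z, pedge (v :: rcons q2 w) y z | pedge (v :: rcons q3 w) y z].

Definition off_edge (y z : T) : bool := e y z && ~~ Hedge y z.

Lemma off_edgeC y z : off_edge y z = off_edge z y.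
Proof. by rewrite /off_edge /Hedge esym !(pedgeC _ y z). Qed.

Lemma no_short_detour a b q : a \in Hvertex -> b \in Hvertex -> a != b ->
  path off_edge a q -> last a q = b -> size q <= 4 -> False.
Proof.
move=> aH bH ab pth; case: (shortenP pth) => p pth' up sub lq sq.
have p0 : 0 < size p by case: p {pth' up sub sq} lq => //= ab'; rewrite ab' eqxx in ab.
have sz : size p <= 4.
  by apply: leq_trans sq; apply: uniq_leq_size => //; case/andP: up.
have pe : path e a p by apply: sub_path pth' => y z /andP[].
case: theta => _ _ /(_ a b p aH bH ab) cond3 _ _.
have : ~~ short_path e a p.
  apply: cond3; first by rewrite /spath pe lq eqxx up.
  by move=> y z /(pedge_path pth') /orP[] /andP[_] //; rewrite /Hedge !(pedgeC _ y z).
by rewrite short_small // p0 sz.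
Qed.

Definition ball2 (a : T) : {set T} :=
  [set z | [|| z == a, off_edge a z | [exists m, off_edge a m && off_edge m z]]].

Lemma ball2_center a : a \in ball2 a.
Proof. by rewrite inE eqxx. Qed.

Lemma ball2P a z : z \in ball2 a ->
  exists q, [/\ path off_edge a q, last a q = z & size q <= 2].
Proof.
rewrite inE => /or3P[/eqP->|h|/existsP[m /andP[h1 h2]]]; first by exists [::].
- by exists [:: z]; rewrite /= h.
- by exists [:: m; z]; rewrite /= h1 h2.
Qed.

Lemma ball2P_rev a z : z \in ball2 a ->
  exists q, [/\ path off_edge z q, last z q = a & size q <= 2].
Proof.
rewrite inE => /or3P[/eqP->|h|/existsP[m /andP[h1 h2]]]; first by exists [::].
- by exists [:: a]; rewrite /= off_edgeC h.
- by exists [:: m; a]; rewrite /= off_edgeC h2 off_edgeC h1.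
Qed.

(* Zones of distinct vertices of H are disjoint, as their centres would
   otherwise be joined by a detour of length at most 4. *)
Lemma ball2_disjoint a b : a \in Hvertex -> b \in Hvertex -> a != b ->
  [disjoint ball2 a & ball2 b].
Proof.
move=> aH bH ab; apply/pred0P=> z /=; apply/negP=> /andP[za zb].
have [qa [pa la sa]] := ball2P za; have [qb [pb lb sb]] := ball2P_rev zb.
apply: (no_short_detour aH bH ab (q := qa ++ qb)).
- by rewrite cat_path pa la pb.
- by rewrite last_cat la lb.
- by rewrite size_cat; apply: leq_add sa sb.
Qed.

Lemma off_edge_out a y : a \in Hvertex -> off_edge a y -> y \notin Hvertex.
Proof.
move=> aH ay; apply/negP=> yH; have ay' : a != y by case/andP: ay => /(edge_neq eirr).
by apply: (no_short_detour aH yH ay' (q := [:: y])); rewrite //= ay.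
Qed.

Lemma ball2_Hvertex a b : a \in Hvertex -> b \in Hvertex -> b \in ball2 a -> b = a.
Proof.
move=> aH bH ba; apply/eqP; apply: contraTT ba => ab.
by rewrite (disjointFr (ball2_disjoint bH aH ab) (ball2_center b)).
Qed.

Lemma v_Hvertex : v \in Hvertex. Proof. exact: mem_head. Qed.

Lemma w_Hvertex : w \in Hvertex.
Proof. by rewrite inE mem_cat mem_rcons mem_head orbT. Qed.

Lemma branch_Hvertex q a : q \in branches -> a \in q -> a \in Hvertex.
Proof.
by rewrite !inE => /or3P[] /eqP-> aq; rewrite !mem_cat !mem_rcons !inE aq !orbT.
Qed.

(* Conditions (1), (2) and (4) for a single branch; a branch has at least
   three inner vertices since paths with at most four edges are short. *)
Lemma branch_shape q : spath e v w (rcons q w) -> ~~ odd (size (rcons q w)) ->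
  ~~ short_path e v (rcons q w) ->
  [/\ path e v (rcons q w), uniq (v :: rcons q w), odd (size q) & 3 <= size q].
Proof.
case/and3P=> pth _ un; rewrite size_rcons /= negbK => oq long; split=> //.
rewrite leqNgt; apply: contra long => sq; apply: short_small => //.
by rewrite size_rcons; lia.
Qed.

Lemma branch_facts q : q \in branches ->
  [/\ path e v (rcons q w), uniq (v :: rcons q w), odd (size q) & 3 <= size q].
Proof.
case: theta => [[_ s1 s2 s3 _] [o1 o2 o3] _ [l1 l2 l3] _].
by rewrite !inE => /or3P[] /eqP->; apply: branch_shape.
Qed.

Lemma branch_ends q : q \in branches -> [/\ v \notin q, w \notin q & uniq q].
Proof.
move=> /branch_facts[_ /= /andP[]]; rewrite mem_rcons inE negb_or.
by case/andP=> _ vq; rewrite rcons_uniq => /andP[-> ->].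
Qed.

Lemma v_neq_w : v != w.
Proof. by case: theta => -[]. Qed.

Lemma branches_disjoint : [/\ {in q1, forall z, z \notin q2}, {in q1, forall z, z \notin q3}
                             & {in q2, forall z, z \notin q3}].
Proof.
case: theta => [[_ _ _ _ [/allP d12 /allP d13 /allP d23]] _ _ _ _].
by rewrite !interior_rcons in d12 d13 d23.
Qed.

Lemma Hedge_branch q a b : q \in branches -> a \in q -> Hedge a b ->
  pedge (v :: rcons q w) a b.
Proof.
move=> qB aq; have [vq wq _] := branch_ends qB.
have [d12 d13 d23] := branches_disjoint.
have off q' : a \notin q' -> pedge (v :: rcons q' w) a b = false.
  move=> aq'; apply: contraNF aq' => /pedge_mem; rewrite inE mem_rcons inE.
  by case/or3P=> // /eqP av; [move: vq|move: wq]; rewrite -av aq.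
move: qB; rewrite !inE /Hedge => /or3P[] /eqP qE; subst q.
- by rewrite (off q2 (d12 _ aq)) (off q3 (d13 _ aq)) !orbF.
- by rewrite (off q1 (contraL (d12 a) aq)) (off q3 (d23 _ aq)) orbF.
- by rewrite (off q1 (contraL (d13 a) aq)) (off q2 (contraL (d23 a) aq)).
Qed.

Lemma branch_off_edge q s1 u t u' s2 b : q \in branches -> t \in q ->
  v :: rcons q w = s1 ++ [:: u, t, u' & s2] -> e t b -> b != u -> b != u' -> off_edge t b.
Proof.
move=> qB tq qE etb bu bu'; rewrite /off_edge etb; apply/negP=> /(Hedge_branch qB tq).
have [_ un _ _] := branch_facts qB; rewrite qE in un *.
by case/(pedge_triple un) => bE; [move: bu|move: bu']; rewrite bE eqxx.
Qed.

Lemma branch_neighbours q s1 u t u' s2 b : q \in branches -> t \in q ->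
  v :: rcons q w = s1 ++ [:: u, t, u' & s2] -> e t b -> [\/ b = u, b = u' | b \in ball2 t].
Proof.
move=> qB tq qE etb; case: (eqVneq b u) => [->|bu]; first by constructor 1.
case: (eqVneq b u') => [->|bu']; first by constructor 2.
by constructor 3; rewrite inE (branch_off_edge qB tq qE etb bu bu') orbT.
Qed.

Lemma branch_triple q a : a \in q ->
  exists s1 u u' s2, v :: rcons q w = s1 ++ [:: u, a, u' & s2].
Proof.
case/splitPr=> p1 p2.
have [u' [s2 E2]] : exists u' s2, rcons p2 w = u' :: s2.
  by case: p2 => [|y p2]; [exists w, [::]|exists y, (rcons p2 w)].
exists (belast v p1), (last v p1), u', s2.
by rewrite rcons_cat /= E2 -cat_cons (lastI v p1) cat_rcons.
Qed.

Lemma Hedge_Hvertex y z : Hedge y z -> y \in Hvertex.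
Proof.
rewrite /Hvertex /Hedge => /or3P[] /pedge_mem; rewrite !(inE, mem_cat, mem_rcons);
  by case/or3P=> ->; rewrite ?orbT.
Qed.

Definition walk_zone (a : T) : {set T} := if a == w then [set w] else ball2 a.

Lemma walk_zone_center a : a \in walk_zone a.
Proof. by rewrite /walk_zone; case: eqP => [->|_]; rewrite ?inE ?eqxx ?ball2_center. Qed.

Lemma walk_zone_sub a : walk_zone a \subset ball2 a.
Proof. by rewrite /walk_zone; case: eqP => [->|_]; rewrite ?sub1set ?ball2_center. Qed.

Lemma walk_zone_branch q a : q \in branches -> a \in q -> walk_zone a = ball2 a.
Proof.
move=> qB aq; have [_ wq _] := branch_ends qB.
by rewrite /walk_zone; case: eqP => // aw; rewrite -aw aq in wq.
Qed.

Lemma walk_zone_disjoint a b : a \in Hvertex -> b \in Hvertex -> a != b ->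
  [disjoint walk_zone a & walk_zone b].
Proof. by move=> aH bH ab; apply: disjointW (walk_zone_sub a) (walk_zone_sub b) _; apply: ball2_disjoint. Qed.

(* Every inner vertex a of a branch has a pendant neighbour: its third
   neighbour y is off H, and so is every edge at y. *)
Lemma branch_pendant q a : q \in branches -> a \in q -> pendant e walk_zone a.
Proof.
move=> qB aq; have [s1 [u [u' [s2 qE]]]] := branch_triple aq.
have [y /and3P[eay yu yu']] := neighbour_except ecub a u u'.
have ay := branch_off_edge qB aq qE eay yu yu'.
have yH := off_edge_out (branch_Hvertex qB aq) ay.
exists y; rewrite (walk_zone_branch qB aq); split=> //; first by rewrite inE ay orbT.
move=> z eyz; rewrite inE; apply/or3P; constructor 3; apply/existsP; exists y.
by rewrite ay /off_edge eyz; apply: contra yH => /Hedge_Hvertex.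
Qed.

Lemma branch_walk q : q \in branches -> walk e walk_zone v (rcons q w).
Proof.
move=> qB; have [pth _ oq sq] := branch_facts qB; have [_ wq uq] := branch_ends qB.
have qH a : a \in q -> a \in Hvertex := branch_Hvertex qB.
split; rewrite ?interior_rcons ?size_rcons /= ?negbK //.
- by move=> a b aq bq; apply: walk_zone_disjoint; apply: qH.
- by move=> a _; apply: walk_zone_center.
- by move=> a /evens_interior; rewrite interior_rcons size_rcons /= negbK => /(_ oq) /(branch_pendant qB).
- move=> s1 u t u' t' sE b etb.
  have tq : t \in q by apply: (@mem_rcons_inner _ q (rcons s1 u) [:: t'] w t u'); rewrite sE cat_rcons.
  rewrite (walk_zone_branch qB tq); apply: (branch_neighbours qB tq _ etb).
  by rewrite sE -cat_cons.
Qed.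

(* Two disjoint branches, walked from v to w and back to v, form a walk
   for B; w then is one of the vertices B colours. *)
Lemma cycle_walk qa qb : qa \in branches -> qb \in branches -> {in qa, forall z, z \notin qb} ->
  walk e walk_zone v (rcons qa w ++ rcons (rev qb) v).
Proof.
move=> qaB qbB dab.
have [ptha _ oqa sqa] := branch_facts qaB; have [_ wqa uqa] := branch_ends qaB.
have [pthb _ oqb sqb] := branch_facts qbB; have [_ wqb uqb] := branch_ends qbB.
have inner : interior (rcons qa w ++ rcons (rev qb) v) = rcons qa w ++ rev qb.
  by rewrite -rcons_cat interior_rcons.
have innerH a : a \in rcons qa w ++ rev qb -> a \in Hvertex.
  rewrite mem_cat mem_rcons inE mem_rev -orbA => /or3P[/eqP->||]; first exact: w_Hvertex.
  - exact: branch_Hvertex qaB.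
  - exact: branch_Hvertex qbB.
have even_qa : ~~ odd (size (rcons qa w)) by rewrite size_rcons /= oqa.
have even_qb : ~~ odd (size (rcons (rev qb) v)) by rewrite size_rcons size_rev /= oqb.
split; rewrite ?inner.
- rewrite cat_path ptha last_rcons /=.
  have := rev_path e v (rcons qb w); rewrite last_rcons belast_rcons rev_cons => ->.
  by rewrite (eq_path (e' := e)) // => y z; rewrite esym.
- by rewrite size_cat oddD (negbTE even_qa) (negbTE even_qb).
- by rewrite size_cat !size_rcons; apply: leq_trans (leq_addr _ _); rewrite ltnS.
- rewrite cat_uniq rcons_uniq wqa uqa rev_uniq uqb /= andbT; apply/hasPn=> z.
  rewrite mem_rev mem_rcons inE negb_or => zb; apply/andP; split.
    by apply: contraNneq wqb => <-.
  by apply: contraL zb; apply: dab.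
- by move=> a b aI bI; apply: walk_zone_disjoint; apply: innerH.
- by move=> a _; apply: walk_zone_center.
- move=> a; rewrite evens_cat // mem_cat => /orP[] /evens_interior.
  + by rewrite interior_rcons => /(_ even_qa) /(branch_pendant qaB).
  + by rewrite interior_rcons mem_rev => /(_ even_qb) /(branch_pendant qbB).
- move=> s1 u t u' t' sE b etb.
  have : rev (rcons qa w ++ rcons (rev qb) v) = rev (s1 ++ [:: u; t; u'; t']) by rewrite sE.
  rewrite !rev_cat !rev_rcons revK /= => -[_ /(cat_prefix3 sqb) [r qbE]].
  have tq : t \in qb by rewrite qbE !inE eqxx orbT.
  have qE : v :: rcons qb w = [:: v] ++ [:: u', t, u & rcons r w] by rewrite qbE.
  rewrite (walk_zone_branch qbB tq).
  by case: (branch_neighbours qbB tq qE etb) => [->|->|]; [constructor 2|constructor 1|constructor 3].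
Qed.
End ThetaGeometry.

Section ThetaStrategy.
Variables (T : finType) (e : rel T).
Hypotheses (esym : symmetric e) (eirr : irreflexive e) (ecub : cubic e).
Variables (x v w : T) (q1 q2 q3 : seq T).
Hypothesis theta : theta_ok e x v w (rcons q1 w) (rcons q2 w) (rcons q3 w).

Local Notation Hvertex := (Hvertex v w q1 q2 q3).
Local Notation branches := (branches q1 q2 q3).
Local Notation walk_zone := (walk_zone e v w q1 q2 q3).

Lemma far_from_x a : a \in Hvertex -> ~~ close e x a.
Proof. by case: theta => _ _ _ _ /allP; apply. Qed.

Lemma x_outside_zones a : a \in Hvertex -> x \notin walk_zone a.
Proof.
move=> aH; apply: contra (far_from_x aH) => /(subsetP (walk_zone_sub _ _ _ _ _ _ a)).
rewrite inE => /or3P[/eqP <-|/andP[ax _]|/existsP[m /andP[/andP[am _] /andP[mx _]]]].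
- exact: close_refl.
- by apply: close_edge; rewrite esym.
- by apply: (close_two (m := m)); rewrite esym.
Qed.

Lemma v_outside_zones a : a \in Hvertex -> a != v -> v \notin walk_zone a.
Proof.
move=> aH av; apply: contra av => /(subsetP (walk_zone_sub _ _ _ _ _ _ a)) va.
by rewrite (ball2_Hvertex esym theta aH (v_Hvertex _ _ _ _ _) va).
Qed.

(* Whatever vertex p A colours, two disjoint branches keep all their
   zones free of p, since zones of different branches are disjoint. *)
Lemma untouched_branches p : exists qa qb, [/\ qa \in branches, qb \in branches,
  {in qa, forall z, z \notin qb}, {in qa, forall b, p \notin walk_zone b}
  & {in qb, forall b, p \notin walk_zone b}].
Proof.
pose touched q := has (fun b => p \in walk_zone b) q.
have untouched q : ~~ touched q -> {in q, forall b, p \notin walk_zone b}.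
  by move=> /hasPn.
have [d12 d13 d23] := branches_disjoint theta.
have B1 : q1 \in branches by rewrite !inE eqxx.
have B2 : q2 \in branches by rewrite !inE eqxx orbT.
have B3 : q3 \in branches by rewrite !inE eqxx !orbT.
have not_both qi qj : qi \in branches -> qj \in branches -> {in qi, forall z, z \notin qj} ->
    touched qi -> ~~ touched qj.
  move=> qiB qjB dij /hasP[bi biq pi]; apply/hasPn=> bj bjq.
  have bij : bi != bj by apply: contraNneq (dij _ biq) => ->.
  have biH := branch_Hvertex v w qiB biq; have bjH := branch_Hvertex v w qjB bjq.
  by rewrite (disjointFr (walk_zone_disjoint esym theta biH bjH bij) pi).
case t1: (touched q1).
  exists q2, q3; split=> //; apply: untouched; apply: not_both t1 => //.
case t2: (touched q2).
  exists q1, q3; split=> //; apply: untouched; rewrite ?t1 //; exact: not_both t2.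
by exists q1, q2; split=> //; apply: untouched; rewrite ?t1 ?t2.
Qed.

(* After A colours x, B colours v; whatever A does next, B walks along
   one branch (if A coloured w) or around two untouched branches. *)
Theorem theta_B_wins (a0 : 'I_3) : B_wins e false (upd (empty_coloring T 3) x a0).
Proof.
set c1 := upd _ x a0.
have vH := v_Hvertex v w q1 q2 q3; have wH := w_Hvertex v w q1 q2 q3.
have [vx wx] : v != x /\ w != x.
  by split; [move: (far_from_x vH)|move: (far_from_x wH)]; apply: contraNneq => ->; apply: close_refl.
have lgv : legal e c1 v col0.
  rewrite /legal /c1 updE (negbTE vx) ffunE eqxx; apply/forallP=> u; apply/implyP=> evu.
  rewrite updE ffunE; case: (u =P x) => // ux.
  by move: (far_from_x vH); rewrite -ux close_edge // esym.
apply: BW_Bmove lgv _; set c2 := upd c1 v col0.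
have wv : w != v by rewrite eq_sym (v_neq_w theta).
apply: BW_Amove => [|p a lgp]; first by apply/forallPn; exists w; rewrite !updE (negbTE wv) (negbTE wx) ffunE.
set c3 := upd c2 p a.
have pv : p != v by apply/eqP=> pv; move: (legal_uncoloured lgp); rewrite pv updE eqxx.
have [qa [qb [qaB qbB dab na nb]]] := untouched_branches p.
have clean b z : b \in Hvertex -> b != v -> p \notin walk_zone b -> z \in walk_zone b -> c3 z = None.
  move=> bH bv pb zb; rewrite !updE ffunE.
  case: (z =P p) => [zp|_]; first by rewrite -zp zb in pb.
  case: (z =P v) => [zv|_]; first by move: (v_outside_zones bH bv); rewrite zv in zb; rewrite zb.
  by case: (z =P x) => [zx|_] //; move: (x_outside_zones bH); rewrite zx in zb; rewrite zb.
have branch_clean q b : q \in branches -> {in q, forall b, p \notin walk_zone b} ->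
    b \in q -> forall z, z \in walk_zone b -> c3 z = None.
  move=> qB nq bq; have [vq _ _] := branch_ends esym theta qB.
  by move=> z; apply: clean (branch_Hvertex v w qB bq) _ (nq _ bq); apply: contraNneq vq => <-.
have c3v : c3 v != None by rewrite /c3 /c2 !updE ifN_eqC // eqxx.
case: (eqVneq p w) => [pw|pw].
- apply: (walk_wins esym eirr ecub (leqnn _) (branch_walk esym eirr ecub theta qaB)) => //.
  + by rewrite interior_rcons => b z bq; apply: branch_clean qaB na bq z.
  + by rewrite last_rcons updE -pw eqxx.
- apply: (walk_wins esym eirr ecub (leqnn _) (cycle_walk esym eirr ecub theta qaB qbB dab)) => //.
  + rewrite -rcons_cat interior_rcons => b z; rewrite mem_cat mem_rcons inE mem_rev -orbA.
    case/or3P=> [/eqP-> zw|bq|bq]; [|exact: branch_clean qaB na bq z|exact: branch_clean qbB nb bq z].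
    apply: clean wH wv _ zw; rewrite /walk_zone eqxx inE; exact: pw.
  + by rewrite last_cat last_rcons.
Qed.
End ThetaStrategy.

Lemma spath_rcons (T : finType) (e : rel T) v w p : v != w -> spath e v w p ->
  exists q, p = rcons q w.
Proof.
move=> vw /and3P[_ /eqP lw _]; case/lastP: p lw => [|q y] /= lw; first by rewrite lw eqxx in vw.
by exists q; rewrite -lw last_rcons.
Qed.

Theorem mainTheorem12 (T : finType) (e : rel T) :
  0 < #|T| -> simple_graph e -> cubic e ->
  (forall x : T, exists (v w : T) (p1 p2 p3 : seq T), theta_ok e x v w p1 p2 p3) ->
  B_wins_game e 3 /\ game_chromatic_number_is e 4.
Proof.
move=> T_nonempty [esym eirr] ecub thetas.
have B3 : B_wins_game e 3.
  apply: BW_Amove (empty_not_complete T_nonempty 3) _ => x a0 _.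
  have [v [w [p1 [p2 [p3 theta]]]]] := thetas x.
  have [[vw s1 s2 s3 _] _ _ _ _] := theta.
  have [q1 E1] := spath_rcons vw s1; have [q2 E2] := spath_rcons vw s2.
  have [q3 E3] := spath_rcons vw s3; subst p1 p2 p3.
  exact: (theta_B_wins esym eirr ecub theta a0).
split=> //; split; first exact: A_wins4_from.
case=> [|[|[|[|j]]]] // _ AW; apply: (A_B_exclusive AW).
- exact: B_wins0.
- exact: B_wins1.
- exact: B_wins2.
- exact: B3.
Qed.
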